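(* Let $\nabla$ be a finite undirected graph (loops allowed) and $X\in\mathbb{L}(\nabla)$. If $Y_0\subsetneq Y_1\subsetneq\cdots\subsetneq Y_n=X$ is a chain of elements of $\mathbb{L}(\nabla)$, then $n$ is at most the number of equilocality classes contained in $X$ that consist of essential vertices.
   Context: For a graph $\nabla$ with vertex set $V$: $\nabla(x)$ is the set of vertices adjacent to $x$, $\nabla(X)=\bigcap_{x\in X}\nabla(x)$ (with $\nabla(\emptyset)=V$), and $\mathbb{L}(\nabla)=\{X\subseteq V:\nabla(\nabla(X))=X\}$ ordered by inclusion. Two vertices $x,y$ are equilocal if $\nabla(x)=\nabla(y)$; equivalence classes are equilocality classes, and each element of $\mathbb{L}(\nabla)$ is a union of them. An element $a$ of a lattice is (completely) meet-irreducible if $a=\bigwedge A$ for a subset $A$ implies $a\in A$; a vertex $x$ is essential if $\nabla(x)$ is meet-irreducible in $\mathbb{L}(\nabla)$ (equilocal vertices are either all essential or all not). *)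

From mathcomp Require Import all_boot.
Set Implicit Arguments. Unset Strict Implicit. Unset Printing Implicit Defensive.

(* A finite undirected graph (loops allowed) on a finType T is a symmetric
   relation e : rel T (no irreflexivity required). *)

Section Locality.
Variables (T : finType) (e : rel T).

Definition nbv (x : T) : {set T} := [set y | e x y].

(* nabla(X) = \bigcap_{x in X} nabla(x), with nabla(set0) = V *)
Definition nbs (X : {set T}) : {set T} := \bigcap_(x in X) nbv x.

Definition Lat : {set {set T}} := [set X : {set T} | nbs (nbs X) == X].

Definition is_meet_in_L (A : {set {set T}}) (a : {set T}) : bool :=
  [&& a \in Lat,
      [forall b in A, a \subset b] &
      [forall b in Lat, [forall c in A, b \subset c] ==> (b \subset a)]].

(* a is (completely) meet-irreducible in L(nabla): whenever a = /\ A for a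
   subset A of L(nabla), a belongs to A *)
Definition meet_irreducible (a : {set T}) : bool :=
  [forall A : {set {set T}}, (A \subset Lat) ==> is_meet_in_L A a ==> (a \in A)].

Definition essential (x : T) : bool := meet_irreducible (nbv x).

Definition eqloc_class (x : T) : {set T} := [set y | nbv y == nbv x].

Definition essential_classes_in (X : {set T}) : {set {set T}} :=
  [set C : {set T} | [exists x, [&& C == eqloc_class x, C \subset X &
                                   [forall y in C, essential y]]]].

End Locality.

From mathcomp Require Import all_boot.
Set Implicit Arguments. Unset Strict Implicit. Unset Printing Implicit Defensive.

(* Each proper step Y_i \proper Y_(i+1) of the chain contains an essential
   vertex x_i: take x_i in Y_(i+1) :\: Y_i with the smallest closure
   nabla(nabla(x_i)).  If nabla(x_i) were the meet of lattice elements a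
   strictly above it, minimality forces nabla(a) \subset Y_i for each of them,
   so nabla(Y_i) is a lower bound of the a's; hence nabla(Y_i) \subset
   nabla(x_i) and x_i \in Y_i, a contradiction.  The classes of the x_i are
   pairwise distinct because the class of x_i lies in Y_(i+1) while x_j lies
   outside Y_j \supset Y_(i+1) for j > i. *)

Section Polarity.
Variables (T : finType) (e : rel T).
Hypothesis e_sym : symmetric e.

Local Notation nbv := (nbv e).
Local Notation nbs := (nbs e).
Local Notation Lat := (Lat e).

Definition closure1 (x : T) : {set T} := nbs (nbv x).

Lemma nbsP (S : {set T}) y : reflect (forall x, x \in S -> e x y) (y \in nbs S).
Proof.
by apply: (iffP bigcapP) => [H x /H | H x /H]; rewrite inE.
Qed.

Lemma nbsS (S S' : {set T}) : S \subset S' -> nbs S' \subset nbs S.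
Proof.
move=> /subsetP sSS'; apply/subsetP => y /nbsP Hy; apply/nbsP => x /sSS'.
exact: Hy.
Qed.

Lemma sub_nbs2 (S : {set T}) : S \subset nbs (nbs S).
Proof.
by apply/subsetP => x Sx; apply/nbsP => y /nbsP Hy; rewrite e_sym Hy.
Qed.

Lemma nbs3 (S : {set T}) : nbs (nbs (nbs S)) = nbs S.
Proof. by apply/eqP; rewrite eqEsubset nbsS ?sub_nbs2. Qed.

Lemma LatP (Z : {set T}) : reflect (nbs (nbs Z) = Z) (Z \in Lat).
Proof. by rewrite inE; apply: eqP. Qed.

Lemma Lat_nbs (S : {set T}) : nbs S \in Lat.
Proof. by apply/LatP; rewrite nbs3. Qed.

Lemma nbs_set1 x : nbs [set x] = nbv x.
Proof. by rewrite /nbs big_set1. Qed.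

Lemma Lat_nbv x : nbv x \in Lat.
Proof. by rewrite -nbs_set1 Lat_nbs. Qed.

Lemma mem_closure1 x : x \in closure1 x.
Proof. by apply/nbsP => y; rewrite inE e_sym. Qed.

Lemma closure1_sub x (Z : {set T}) : Z \in Lat -> x \in Z -> closure1 x \subset Z.
Proof.
move=> /LatP LZ xZ; rewrite -LZ /closure1 -nbs_set1.
by apply/nbsS/nbsS; rewrite sub1set.
Qed.

Lemma mem_eqloc_class x : x \in eqloc_class e x.
Proof. by rewrite inE. Qed.

Lemma eqloc_class_sub x (Z : {set T}) :
  Z \in Lat -> x \in Z -> eqloc_class e x \subset Z.
Proof.
move=> LZ /(closure1_sub LZ) /subsetP clxZ; apply/subsetP => y.
by rewrite inE => /eqP nbvy; apply: clxZ; rewrite /closure1 -nbvy mem_closure1.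
Qed.

Lemma eqloc_class_separated x y (Z : {set T}) :
  Z \in Lat -> x \in Z -> y \notin Z -> eqloc_class e x != eqloc_class e y.
Proof.
move=> LZ xZ; apply: contra => /eqP exy.
by apply: (subsetP (eqloc_class_sub LZ xZ)); rewrite exy mem_eqloc_class.
Qed.

Section MinimalNewVertex.
Variables (Y0 Y1 : {set T}) (x : T).
Hypotheses (LY0 : Y0 \in Lat) (LY1 : Y1 \in Lat).
Hypotheses (xY1 : x \in Y1) (xNY0 : x \notin Y0).
Hypothesis closure1_min :
  forall w, w \in Y1 -> w \notin Y0 -> #|closure1 x| <= #|closure1 w|.

Lemma nbs_above_nbv_sub (a : {set T}) :
  a \in Lat -> nbv x \subset a -> a != nbv x -> nbs a \subset Y0.
Proof.
move=> /LatP La xa; apply: contraNT => /subsetPn [w wa wNY0].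
have a_clx : nbs a \subset closure1 x := nbsS xa.
have wY1 : w \in Y1.
  by apply: subsetP (closure1_sub LY1 xY1) w (subsetP a_clx w wa).
have clw_a : closure1 w \subset nbs a := closure1_sub (Lat_nbs a) wa.
have /eqP a_eq : nbs a == closure1 x.
  by rewrite eqEcard a_clx (leq_trans (closure1_min wY1 wNY0)) ?subset_leq_card.
by rewrite -La a_eq; apply/eqP/LatP/Lat_nbv.
Qed.

Lemma essential_minimal_new_vertex : essential e x.
Proof.
apply/forallP => A; apply/implyP => /subsetP AL.
apply/implyP => /and3P [_ /forall_inP xA /forall_inP glbA].
apply: contraT => xNA.
have nbsY0_low : [forall c in A, nbs Y0 \subset c].
  apply/forall_inP => c cA; rewrite -(LatP _ (AL c cA)); apply: nbsS.
  by apply: nbs_above_nbv_sub; rewrite ?AL ?xA //; apply: contraNneq xNA => <-.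
have /nbsS : nbs Y0 \subset nbv x.
  exact: implyP (glbA _ (Lat_nbs Y0)) nbsY0_low.
move/LatP: LY0 => -> /subsetP /(_ x (mem_closure1 x)).
by rewrite (negbTE xNY0).
Qed.

End MinimalNewVertex.

Lemma proper_Lat_essential (Y0 Y1 : {set T}) :
  Y0 \in Lat -> Y1 \in Lat -> Y0 \proper Y1 ->
  exists x, [&& x \in Y1, x \notin Y0 & essential e x].
Proof.
move=> LY0 LY1 /properP [_ [x0 x0Y1 x0NY0]].
have new_x0 : x0 \in Y1 :\: Y0 by rewrite inE x0Y1 x0NY0.
have [x /setDP [xY1 xNY0] xmin] :=
  @arg_minnP _ x0 [pred w in Y1 :\: Y0] (fun w => #|closure1 w|) new_x0.
exists x; rewrite xY1 xNY0 /=.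
apply: (essential_minimal_new_vertex LY0 LY1 xY1 xNY0) => w wY1 wNY0.
by apply: xmin; rewrite /= !inE wY1 wNY0.
Qed.

Lemma card_le_essential_classes (I : finType) (f : I -> T) (X : {set T}) :
  X \in Lat -> (forall i, f i \in X) -> (forall i, essential e (f i)) ->
  injective (fun i => eqloc_class e (f i)) ->
  #|I| <= #|essential_classes_in e X|.
Proof.
move=> LX fX fess /card_imset <-.
apply/subset_leq_card/subsetP => _ /imsetP [i _ ->].
rewrite inE; apply/existsP; exists (f i); rewrite eqxx eqloc_class_sub //=.
by apply/forall_inP => y; rewrite inE /essential => /eqP ->; apply: fess.
Qed.

End Polarity.

Theorem mainTheorem20 (T : finType) (e : rel T) (e_sym : symmetric e)
  (X : {set T}) (HX : X \in Lat e)
  (n : nat) (Y : nat -> {set T})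
  (HYL : forall i, i <= n -> Y i \in Lat e)
  (HYch : forall i, i < n -> Y i \proper Y i.+1)
  (HYn : Y n = X) :
  n <= #|essential_classes_in e X|.
Proof.
have Ymono i j : i <= j <= n -> Y i \subset Y j.
  move=> /andP [ij jn]; have in_n : i <= n := leq_trans ij jn.
  apply: (@homo_leq_in _ [pred k | k <= n] Y (fun A B => A \subset B)) ij => //=.
  - by move=> B A C; apply: subset_trans.
  - by move=> k l _ ln m /andP [_ /ltnW ml]; apply: leq_trans ml ln.
  - by move=> k _ kn; apply: proper_sub (HYch k kn).
have step (i : 'I_n) := proper_Lat_essential e_sym (HYL i (ltnW (ltn_ord i)))
  (HYL i.+1 (ltn_ord i)) (HYch i (ltn_ord i)).
pose x i := xchoose (step i).
have xP i : [&& x i \in Y i.+1, x i \notin Y i & essential e (x i)] :=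
  xchooseP (step i).
have classes_neq (i j : 'I_n) :
    i < j -> eqloc_class e (x i) != eqloc_class e (x j).
  move=> ij; have /and3P [xi _ _] := xP i; have /and3P [_ xj _] := xP j.
  apply: (eqloc_class_separated e_sym (HYL i.+1 (ltn_ord i)) xi).
  by apply: contra xj; apply/subsetP/Ymono; rewrite ij ltnW.
rewrite -[n]card_ord; apply: (card_le_essential_classes e_sym HX).
- move=> i; have /and3P [xi _ _] := xP i; rewrite -HYn.
  by apply: subsetP (Ymono _ _ _) _ xi; rewrite ltn_ord leqnn.
- by move=> i; have /and3P [_ _ ->] := xP i.
- move=> i j eq_ij; apply: val_inj.
  by case: (ltngtP i j) => // [/classes_neq|/classes_neq]; rewrite eq_ij eqxx.
Qed.
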